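(* Let $S$ be a closed oriented surface of genus at least two. If $f_1,\ldots,f_m$ generate an abelian subgroup $\mathcal{F}$ of $\mathrm{Homeo}_0(S)$, then $\bigcap_{i=1}^m \mathrm{Fix}_c(f_i)\subset \mathrm{Fix}_c(\mathcal{F})$.
   Context: $\mathrm{Homeo}_0(S)$ is the group of homeomorphisms of $S$ isotopic to the identity. Let $\tilde S$ be the universal cover of $S$. For $f\in\mathrm{Homeo}_0(S)$, the identity lift $\tilde f$ is the unique lift of $f$ to $\tilde S$ commuting with all covering translations. $\mathrm{Fix}_c(f)$ (the contractible fixed points) is the projection to $S$ of $\mathrm{Fix}(\tilde f)$. For a subgroup $\mathcal{F}$, $\mathrm{Fix}_c(\mathcal{F})$ is the set of points lying in $\mathrm{Fix}_c(f)$ for all $f\in\mathcal{F}$. *)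

From HB Require Import structures.
From mathcomp Require Import all_boot all_order all_algebra.
From mathcomp Require Import all_classical all_reals all_analysis.
Import numFieldNormedType.Exports.
Set Implicit Arguments. Unset Strict Implicit. Unset Printing Implicit Defensive.
Import Order.TTheory GRing.Theory Num.Theory.
Local Open Scope classical_set_scope.
Local Open Scope ring_scope.

Definition hplane (R : realType) : set (R * R) := [set p | 0 < p.2].

(* Action of a 2x2 real matrix g = [[a,b],[c,d]] of determinant 1 on the upper
   half plane by the Moebius transformation z |-> (a z + b) / (c z + d),
   written in real coordinates z = x + i y. *)
Definition mob (R : realType) (g : 'M[R]_2) (p : R * R) : R * R :=
  let a := g 0 0 in let b := g 0 1 in let c := g 1 0 in let d := g 1 1 in
  let x := p.1 in let y := p.2 in
  let D := (c * x + d) ^+ 2 + (c * y) ^+ 2 in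
  (((a * x + b) * (c * x + d) + a * c * y ^+ 2) / D, y / D).

(* Gamma (a set of matrices) is a discrete subgroup of SL(2,R) acting freely
   (modulo -1) on the hyperbolic plane: a torsion-free Fuchsian group. *)
Definition fuchsian_free (R : realType) (Gam : set 'M[R]_2) : Prop :=
  [/\ (forall g, Gam g -> \det g = 1) /\ Gam 1%:M,
      (forall g h, Gam g -> Gam h -> Gam (g *m h)),
      (forall g, Gam g -> Gam (invmx g)),
      (exists2 e : R, 0 < e & forall g, Gam g ->
          (forall i j, `|g i j - ((i == j)%:R : R)| < e) -> g = 1%:M)
    & (forall g z, Gam g -> @hplane R z -> mob g z = z ->
          g = 1%:M \/ g = - 1%:M)].

(* pi : hplane -> S is (a model of) the quotient map hplane -> hplane/Gamma:
   continuous, open, surjective, and its fibres are exactly the Gamma-orbits.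
   Hence S is homeomorphic to hplane/Gamma and pi is the universal cover. *)
Definition quotient_by (R : realType) (S : topologicalType)
    (Gam : set 'M[R]_2) (pi : R * R -> S) : Prop :=
  [/\ {within @hplane R, continuous pi},
      (forall U, open U -> U `<=` @hplane R -> open (pi @` U)),
      (forall x : S, exists2 z, @hplane R z & pi z = x)
    & (forall z w, @hplane R z -> @hplane R w ->
          (pi z = pi w <-> exists2 g, Gam g & w = mob g z))].

(* A closed oriented surface of genus >= 2, given with its universal cover
   (the hyperbolic plane) and its group of covering translations Gamma. *)
Definition hyperbolic_surface (R : realType) (S : topologicalType)
    (Gam : set 'M[R]_2) (pi : R * R -> S) : Prop :=
  [/\ fuchsian_free Gam, quotient_by Gam pi & compact [set: S]].

Definition homeo (S : topologicalType) (f : S -> S) : Prop :=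
  continuous f /\ exists2 g : S -> S, continuous g & cancel f g /\ cancel g f.

Definition Homeo0 (R : realType) (S : topologicalType) (f : S -> S) : Prop :=
  homeo f /\ exists I : R * S -> S,
    [/\ {within `[0, 1] `*` [set: S], continuous I},
        (forall t : R, 0 <= t <= 1 -> homeo (fun x => I (t, x))),
        (forall x, I (0, x) = x)
      & (forall x, I (1, x) = f x)].

Definition identity_lift (R : realType) (S : topologicalType)
    (Gam : set 'M[R]_2) (pi : R * R -> S) (f : S -> S) (F : R * R -> R * R)
    : Prop :=
  [/\ {within @hplane R, continuous F},
      (forall z, @hplane R z -> @hplane R (F z)),
      (forall z, @hplane R z -> pi (F z) = f (pi z))
    & (forall g z, Gam g -> @hplane R z -> F (mob g z) = mob g (F z))].

Definition Fix_c (R : realType) (S : topologicalType)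
    (Gam : set 'M[R]_2) (pi : R * R -> S) (f : S -> S) : set S :=
  [set x | exists F, identity_lift Gam pi f F /\
             exists2 z, @hplane R z & F z = z /\ pi z = x].

Inductive gen_group (S : Type) (m : nat) (fs : 'I_m -> S -> S) : (S -> S) -> Prop :=
  | gen_id : gen_group fs id
  | gen_mul : forall g i, gen_group fs g -> gen_group fs (g \o fs i)
  | gen_mulV : forall g i h, gen_group fs g -> cancel (fs i) h ->
      cancel h (fs i) -> gen_group fs (g \o h).

Definition Fix_c_group (R : realType) (S : topologicalType)
    (Gam : set 'M[R]_2) (pi : R * R -> S) (G : (S -> S) -> Prop) : set S :=
  [set x | forall f, G f -> Fix_c Gam pi f x].

(* An identity lift commutes with the deck group, so if it fixes one lift of a point
   it fixes all of them.  Hence, given a lift z of a common contractible fixed point,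
   every generator has an identity lift fixing z, and composites and inverses of these
   are identity lifts of the corresponding composites and inverses, still fixing z.  The only analytic point is that the
   inverse of a lift is continuous, because the covering map is a local homeomorphism:
   no non-trivial deck transformation moves a point of a small ball around w into that
   ball, since a sequence of such transformations for shrinking balls would have
   bounded entries, hence (by discreteness) a recurring element, which would fix w. *)

From HB Require Import structures.
From mathcomp Require Import all_boot all_order all_algebra.
From mathcomp Require Import all_classical all_reals all_analysis.
From mathcomp Require Import ring lra.
Import numFieldNormedType.Exports.
Import Order.TTheory GRing.Theory Num.Theory.
Local Open Scope classical_set_scope.
Local Open Scope ring_scope.
Set Implicit Arguments. Unset Strict Implicit. Unset Printing Implicit Defensive.

Lemma det_mx22 (R : comNzRingType) (g : 'M[R]_2) :
  \det g = g 0 0 * g 1 1 - g 0 1 * g 1 0.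
Proof.
rewrite (expand_det_row _ 0) !big_ord_recl big_ord0 addr0 /cofactor !det_mx11 !mxE.
have -> : lift (0 : 'I_2) (0 : 'I_1) = 1 by apply: val_inj.
have -> : lift (1 : 'I_2) (0 : 'I_1) = 0 by apply: val_inj.
by rewrite /= expr0 expr1; ring.
Qed.

Lemma invmx_det1 (R : comUnitRingType) (g : 'M[R]_2) : \det g = 1 ->
  [/\ invmx g 0 0 = g 1 1, invmx g 0 1 = - g 0 1,
      invmx g 1 0 = - g 1 0 & invmx g 1 1 = g 0 0].
Proof.
move=> g1; have gU : g \in unitmx by rewrite unitmxE g1 unitr1.
rewrite /invmx gU g1 invr1 !scale1r !mxE /cofactor !det_mx11 !mxE.
have -> : lift (0 : 'I_2) (0 : 'I_1) = 1 by apply: val_inj.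
have -> : lift (1 : 'I_2) (0 : 'I_1) = 0 by apply: val_inj.
rewrite /bump /= (_ : 1 %% 2 = 1)%N //.
by split; rewrite ?(expr0, expr1, expr2, mul1r, mulN1r, opprK).
Qed.

Lemma ord2P (i : 'I_2) : i = 0 \/ i = 1.
Proof. by case: i => [[|[|//]] ?]; [left | right]; apply: val_inj. Qed.

Section Moebius.
Variable R : realType.
Implicit Types (g : 'M[R]_2) (z w : R * R).

Definition mob_num g z :=
  (g 0 0 * z.1 + g 0 1) * (g 1 0 * z.1 + g 1 1) + g 0 0 * g 1 0 * z.2 ^+ 2.
Definition mob_den g z := (g 1 0 * z.1 + g 1 1) ^+ 2 + (g 1 0 * z.2) ^+ 2.

Lemma mobE g z : mob g z = (mob_num g z / mob_den g z, z.2 / mob_den g z).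
Proof. by []. Qed.

Lemma mob_den_gt0 g z : \det g = 1 -> 0 < z.2 -> 0 < mob_den g z.
Proof.
rewrite det_mx22 /mob_den => g1 z2; rewrite lt_neqAle addr_ge0 ?sqr_ge0 // andbT.
apply: contra_eq_neq g1 => /esym/eqP; rewrite paddr_eq0 ?sqr_ge0 //.
rewrite !sqrf_eq0 mulf_eq0 (gt_eqF z2) orbF => /andP[/eqP + /eqP c0].
by rewrite c0 mul0r add0r => ->; rewrite !mulr0 subr0 eq_sym oner_neq0.
Qed.

Lemma hplane_mob g z : \det g = 1 -> hplane z -> hplane (mob g z).
Proof. by move=> g1 z2; rewrite /hplane /= divr_gt0 // mob_den_gt0. Qed.

Lemma mob1 z : mob 1%:M z = z.
Proof.
case: z => x y; rewrite /mob !mxE /= !(mul0r, mulr0, mul1r, mulr1, addr0, add0r).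
by rewrite expr1n expr0n addr0 !divr1.
Qed.

Lemma mobN1 z : mob (- 1%:M) z = z.
Proof.
case: z => x y; rewrite /mob !mxE /=.
rewrite !(mul0r, mulr0, mul1r, mulr1, addr0, add0r, oppr0, mulN1r, mulrN1, mulrNN).
by rewrite sqrrN expr1n expr0n addr0 !divr1 opprK.
Qed.

Lemma mob_continuous g w : mob_den g w != 0 -> {for w, continuous (mob g)}.
Proof.
move=> den0.
have cst (a : R) : {for w, continuous (fun _ : R * R => a)} by exact: cvg_cst.
have c1 : {for w, continuous (fun u : R * R => u.1)} by exact: cvg_fst.
have c2 : {for w, continuous (fun u : R * R => u.2)} by exact: cvg_snd.
have csq (f : R * R -> R) :
    {for w, continuous f} -> {for w, continuous (fun u => f u ^+ 2)}.
  by move=> hf; exact: (continuousM hf hf).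
have cden : {for w, continuous (mob_den g)}.
  by repeat first [apply: csq | apply: continuousM | apply: continuousD].
have cnum : {for w, continuous (mob_num g)}.
  by repeat first [apply: csq | apply: continuousM | apply: continuousD].
exact: (cvg_pair (continuousM cnum (continuousV den0 cden))
                 (continuousM c2 (continuousV den0 cden))).
Qed.

Lemma normr_le_1Dsqr (t : R) : `|t| <= 1 + t ^+ 2.
Proof. rewrite -real_normK ?num_real //; have := normr_ge0 t; nra. Qed.

Lemma sqr_le_of_normr (x X : R) : `|x| <= X -> x ^+ 2 <= X ^+ 2.
Proof. rewrite -real_normK ?num_real //; have := normr_ge0 x; nra. Qed.

Lemma mob_den_eq g z : \det g = 1 -> 0 < z.2 -> mob_den g z = z.2 / (mob g z).2.
Proof. by move=> g1 z2; rewrite mobE /= divKf // gt_eqF. Qed.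

(* |az + b|^2 |cz + d|^2 = |(az + b)(cz + d)^*|^2, and (az + b)(cz + d)^* has real part
   [mob_num g z] and imaginary part (ad - bc) Im z. *)
Lemma mob_num_sqr g z : \det g = 1 -> 0 < z.2 ->
  (g 0 0 * z.1 + g 0 1) ^+ 2 + (g 0 0 * z.2) ^+ 2
    = mob_den g z * ((mob g z).1 ^+ 2 + (mob g z).2 ^+ 2).
Proof.
move=> g1 z2; have D0 := lt0r_neq0 (mob_den_gt0 g1 z2).
have lagrange : ((g 0 0 * z.1 + g 0 1) ^+ 2 + (g 0 0 * z.2) ^+ 2) * mob_den g z
    = mob_num g z ^+ 2 + (z.2 * \det g) ^+ 2.
  by rewrite det_mx22 /mob_num /mob_den; ring.
rewrite mobE /=; apply/(mulIf D0); rewrite /= lagrange g1 mulr1; field.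
by rewrite D0.
Qed.

Lemma row_sqr_le (c d x y M P X2 : R) : 0 < P -> P <= y ^+ 2 -> x ^+ 2 <= X2 ->
  (c * y) ^+ 2 <= M -> (c * x + d) ^+ 2 <= M ->
  c ^+ 2 + d ^+ 2 <= (1 + 2 * X2) * (M / P) + 2 * M.
Proof.
move=> P0 Py xX cyM cxdM.
have cM : c ^+ 2 <= M / P.
  rewrite ler_pdivlMr //; apply: le_trans cyM.
  by rewrite exprMn ler_wpM2l ?sqr_ge0.
have cxM : (c * x) ^+ 2 <= M / P * X2.
  by rewrite exprMn; apply: ler_pM; rewrite ?sqr_ge0.
have := sqr_ge0 (c * x + d + c * x); nra.
Qed.

Lemma mob_entries_bounded (X Y0 Y1 : R) : 0 < Y0 -> exists B : R,
  forall g z z', \det g = 1 -> `|z.1| <= X -> `|z'.1| <= X ->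
    Y0 <= z.2 <= Y1 -> Y0 <= z'.2 <= Y1 -> mob g z = z' ->
    forall i j, `|g i j| <= B.
Proof.
move=> Y00; pose K := Y1 / Y0; pose L := K * (X ^+ 2 + Y1 ^+ 2).
pose row_bound M := (1 + 2 * X ^+ 2) * (M / Y0 ^+ 2) + 2 * M.
exists (1 + (row_bound K + row_bound L)) => g z z' g1 zX z'X /andP[Y0z zY1]
  /andP[Y0z' z'Y1] gzz' i j.
have z20 : 0 < z.2 by apply: lt_le_trans Y0z.
have z'20 : 0 < z'.2 by apply: lt_le_trans Y0z'.
have DK : mob_den g z <= K.
  rewrite mob_den_eq // gzz'; apply: ler_pM => //; first exact: ltW.
    by rewrite invr_ge0 ltW.
  by rewrite lef_pV2 ?posrE.
have D0 := mob_den_gt0 g1 z20.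
have P0 : 0 < Y0 ^+ 2 by rewrite exprn_gt0.
have Py : Y0 ^+ 2 <= z.2 ^+ 2 by apply: sqr_le_of_normr; rewrite ger0_norm // ltW.
have xX := sqr_le_of_normr zX.
have row1 : g 1 0 ^+ 2 + g 1 1 ^+ 2 <= row_bound K.
  apply: row_sqr_le P0 Py xX _ _; apply: le_trans DK;
    by rewrite /mob_den (lerDl, lerDr) sqr_ge0.
have row0 : g 0 0 ^+ 2 + g 0 1 ^+ 2 <= row_bound L.
  have SL : (g 0 0 * z.1 + g 0 1) ^+ 2 + (g 0 0 * z.2) ^+ 2 <= L.
    rewrite mob_num_sqr // gzz'; apply: ler_pM; rewrite ?addr_ge0 ?sqr_ge0 ?(ltW D0) //.
    apply: lerD; first exact: sqr_le_of_normr.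
    by apply: sqr_le_of_normr; rewrite ger0_norm // ltW.
  by apply: row_sqr_le P0 Py xX _ _; apply: le_trans SL; rewrite (lerDl, lerDr) sqr_ge0.
apply: le_trans (normr_le_1Dsqr _) _; rewrite lerD2l.
have := sqr_ge0 (g 0 0); have := sqr_ge0 (g 0 1); have := sqr_ge0 (g 1 0).
have := sqr_ge0 (g 1 1).
by case: (ord2P i) => ->; case: (ord2P j) => ->; lra.
Qed.

End Moebius.

Section Recurrence.
Variable R : realType.

Lemma compact_seq_recurrent (T : pseudoMetricType R) (K : set T) (u : nat -> T)
    (d : R) : compact K -> (forall n, K (u n)) -> 0 < d ->
  exists n0, forall N, exists2 n, (N <= n)%N & ball (u n0) d (u n).
Proof.
move=> cK Ku d0; have d20 : 0 < d / 2 by rewrite divr_gt0.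
have uK : (u @ \oo) K by apply: (@filterE _ \oo).
have [p [_ p_cluster]] := cK _ _ uK.
have often N : exists2 n, (N <= n)%N & ball p (d / 2) (u n).
  have tail : (u @ \oo) (u @` [set n | (N <= n)%N]).
    by apply: filterS (nbhs_infty_ge N) => n Nn; exists n.
  have [_ [[n Nn <-] pun]] := p_cluster _ _ tail (nbhsx_ballx p _ d20).
  by exists n.
have [n0 _ pun0] := often 0%N.
exists n0 => N; have [n Nn pun] := often N; exists n => //.
by rewrite [d]splitr; apply: ball_triangle (ball_sym pun0) pun.
Qed.

Lemma ball_normR (a b r : R) : ball a r b = (`|a - b| < r).
Proof. by rewrite -ball_normE. Qed.

Lemma bounded_mx_seq_recurrent (gs : nat -> 'M[R]_2) (B d : R) :
  (forall n i j, `|gs n i j| <= B) -> 0 < d ->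
  exists n0, forall N, exists2 n, (N <= n)%N & forall i j, `|gs n0 i j - gs n i j| < d.
Proof.
move=> gsB d0.
pose v n := (gs n 0 0, (gs n 0 1, (gs n 1 0, gs n 1 1))).
pose I : set R := [set` `[- B, B]].
have cK : compact (I `*` (I `*` (I `*` I))).
  have cI : compact I by exact: segment_compact.
  by do 3! apply: compact_setX => //.
have Kv n : (I `*` (I `*` (I `*` I))) (v n).
  have gsI i j : I (gs n i j) by rewrite /I /= in_itv /= -ler_norml.
  by do !split; apply: gsI.
have [n0 rec] := compact_seq_recurrent cK Kv d0.
exists n0 => N; have [n Nn [/= b00 [b01 [b10 b11]]]] := rec N.
exists n => // i j; rewrite -ball_normR.
by case: (ord2P i) => ->; case: (ord2P j) => ->.
Qed.

End Recurrence.

Section Fuchsian.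
Variables (R : realType) (Gam : set 'M[R]_2).
Hypothesis GamF : fuchsian_free Gam.

Lemma fuchsian_det g : Gam g -> \det g = 1.
Proof. by case: GamF => [[+ _] _ _ _ _]; apply. Qed.

(* [g] is close to [h] iff [g h^-1] is close to [1], where [Gam] is discrete. *)
Lemma fuchsian_near_eq (B : R) : exists2 eta : R, 0 < eta &
  forall g h, Gam g -> Gam h -> (forall i j, `|h i j| <= B) ->
    (forall i j, `|g i j - h i j| < eta) -> g = h.
Proof.
case: GamF => _ Gam_mul Gam_inv [e0 e00 Gam_disc] _.
have B20 : 0 < 2 * (`|B| + 1) by rewrite mulr_gt0 // ltr_wpDl.
pose eta := e0 / (2 * (`|B| + 1)).
have eta0 : 0 < eta by rewrite divr_gt0.
have etaB : 2 * eta * `|B| < e0.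
  by rewrite -[e0](divfK (lt0r_neq0 B20)) -/eta; nra.
exists eta => // g h Gg Gh hB gh.
have h1 := fuchsian_det Gh; have hU : h \in unitmx by rewrite unitmxE h1 unitr1.
have ihB l j : `|invmx h l j| <= `|B|.
  have [i00 i01 i10 i11] := invmx_det1 h1; apply: le_trans _ (ler_norm B).
  by case: (ord2P l) => ->; case: (ord2P j) => ->; rewrite ?i00 ?i01 ?i10 ?i11 ?normrN.
suff /(congr1 (mulmx^~ h)) : g *m invmx h = 1%:M by rewrite mulmxKV // mul1mx.
apply: Gam_disc; first exact: Gam_mul Gg (Gam_inv _ Gh).
move=> i j; have -> : (g *m invmx h) i j - (i == j)%:R = ((g - h) *m invmx h) i j.
  by rewrite mulmxBl mulmxV // !mxE.
rewrite !mxE !big_ord_recl big_ord0 addr0 !mxE.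
have term l : `|(g i l - h i l) * invmx h l j| <= eta * `|B|.
  by rewrite normrM; apply: ler_pM => //; apply: ltW.
apply: le_lt_trans (ler_normD _ _) _; move: (term ord0) (term (lift ord0 ord0)); lra.
Qed.

Lemma fuchsian_bounded_seq_recurrent (gs : nat -> 'M[R]_2) (B : R) :
  (forall n, Gam (gs n)) -> (forall n i j, `|gs n i j| <= B) ->
  exists n0, forall N, exists2 n, (N <= n)%N & gs n = gs n0.
Proof.
move=> Ggs gsB; have [eta eta0 near_eq] := fuchsian_near_eq B.
have [n0 rec] := bounded_mx_seq_recurrent gsB eta0.
exists n0 => N; have [n Nn gsn] := rec N; exists n => //.
by apply: near_eq => // i j; rewrite distrC.
Qed.

End Fuchsian.

Section LocalInjectivity.
Variable R : realType.

Lemma fixed_of_near_fixed (V : pseudoMetricNormedZmodType R) (f : V -> V) w :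
  {for w, continuous f} ->
  (forall r, 0 < r -> exists2 u, ball w r u & ball w r (f u)) -> f w = w.
Proof.
move=> fw near_fix; apply/eqP/contraT; rewrite -subr_eq0 -normr_gt0.
set e := `|f w - w| => e0; have e20 : 0 < e / 2 by rewrite divr_gt0.
have /cvgrPdist_lt/(_ _ e20)/nbhs_ballP[d d0 fwd] := fw.
pose r := Num.min d (e / 2).
have [u wu wfu] : exists2 u, ball w r u & ball w r (f u).
  by apply: near_fix; rewrite lt_min d0.
have /fwd /= fwfu : ball w d u by apply: le_ball wu; rewrite ge_min lexx.
have : ball w (e / 2) (f u) by apply: le_ball wfu; rewrite ge_min lexx orbT.
rewrite -ball_normE /=.
have : e <= `|f w - f u| + `|w - f u| by rewrite [`|w - _|]distrC ler_distD.
lra.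
Qed.

Lemma ball_hplane_box (x0 y0 r : R) (u : R * R) : r <= 1 -> r <= y0 / 2 ->
  ball (x0, y0) r u -> `|u.1| <= `|x0| + 1 /\ y0 / 2 <= u.2 <= 3 * y0 / 2.
Proof.
move=> r1 ry0 [/=]; rewrite !ball_normR => xu yu; split.
  have := ler_normB x0 (x0 - u.1); rewrite subKr; lra.
by move: yu; rewrite ltr_norml => /andP[? ?]; apply/andP; split; lra.
Qed.

Lemma eventually_le_div_succ (rho r : R) : 0 < r ->
  exists N, forall n, (N <= n)%N -> rho / n.+1%:R <= r.
Proof.
move=> r0; exists (Num.truncn (rho / r)) => n Nn.
rewrite ler_pdivrMr // mulrC -ler_pdivrMr //; apply/ltW/(lt_le_trans (truncnS_gt _)).
by rewrite ler_nat.
Qed.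

Lemma fuchsian_locally_free (Gam : set 'M[R]_2) : fuchsian_free Gam ->
  forall w, hplane w -> exists2 r : R, 0 < r &
    forall g u, Gam g -> ball w r u -> ball w r (mob g u) -> mob g u = u.
Proof.
move=> GamF [x0 y0] /= y00; apply: contrapT => not_free.
pose rho := Num.min 1 (y0 / 2); pose rr n := rho / n.+1%:R.
have rho0 : 0 < rho by rewrite lt_min ltr01 divr_gt0.
have rr_le n : rr n <= rho by rewrite ler_pdivrMr // ler_peMr ?(ltW rho0) // ler1n.
have bad n : exists q : (R * R) * 'M[R]_2, [/\ Gam q.2, ball (x0, y0) (rr n) q.1,
    ball (x0, y0) (rr n) (mob q.2 q.1) & mob q.2 q.1 <> q.1].
  apply: contrapT => no_q; apply: not_free; exists (rr n); first by rewrite divr_gt0.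
  move=> g u Gg wu wgu; apply: contrapT => gu; apply: no_q; exists (u, g).
  by split.
have [q qP] := choice bad.
have in_box n u : ball (x0, y0) (rr n) u ->
    `|u.1| <= `|x0| + 1 /\ y0 / 2 <= u.2 <= 3 * y0 / 2.
  by apply: ball_hplane_box; apply: le_trans (rr_le n) _; rewrite ge_min lexx ?orbT.
have y020 : 0 < y0 / 2 by rewrite divr_gt0.
have [B gB] := mob_entries_bounded (`|x0| + 1) (3 * y0 / 2) y020.
have [n0 rec] : exists n0, forall N, exists2 n, (N <= n)%N & (q n).2 = (q n0).2.
  apply: (fuchsian_bounded_seq_recurrent GamF (B := B)) => n; first by case: (qP n).
  have [Gq qn1 qn2 _] := qP n.
  have [x1 y1] := in_box n _ qn1; have [x2 y2] := in_box n _ qn2.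
  exact: (gB _ _ _ (fuchsian_det GamF Gq) x1 x2 y1 y2 erefl).
have [Gq0 _ _ q0_moved] := qP n0.
have q0_fix : mob (q n0).2 (x0, y0) = (x0, y0).
  apply: fixed_of_near_fixed.
    by apply: mob_continuous; rewrite lt0r_neq0 // mob_den_gt0 // (fuchsian_det GamF Gq0).
  move=> r r0; have [N Nr] := eventually_le_div_succ rho r0.
  have [n Nn qn] := rec N; have [_ qn1 qn2 _] := qP n.
  exists (q n).1; first exact: (le_ball (Nr n Nn) qn1).
  by rewrite -qn; exact: (le_ball (Nr n Nn) qn2).
have [_ _ _ _ Gam_free] := GamF; apply: q0_moved.
by case: (Gam_free _ _ Gq0 y00 q0_fix) => ->; rewrite ?mob1 ?mobN1.
Qed.

Lemma quotient_locally_injective (S : topologicalType) (Gam : set 'M[R]_2)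
    (pi : R * R -> S) : fuchsian_free Gam -> quotient_by Gam pi ->
  forall w, hplane w -> exists2 r : R, 0 < r & forall u u', hplane u -> hplane u' ->
    ball w r u -> ball w r u' -> pi u = pi u' -> u = u'.
Proof.
move=> GamF [_ _ _ pi_fibre] w wP.
have [r r0 small_free] := fuchsian_locally_free GamF wP.
exists r => // u u' uP u'P wu wu' /(pi_fibre u u' uP u'P)[g Gg u'E].
by rewrite u'E small_free // -u'E.
Qed.

End LocalInjectivity.

Section IdentityLifts.
Variables (R : realType) (S : topologicalType) (Gam : set 'M[R]_2) (pi : R * R -> S).

Lemma open_hplane : open (@hplane R).
Proof.
have -> : @hplane R = snd @^-1` [set y | 0 < y] by [].
by apply: (continuousP _).1; [move=> p; exact: cvg_snd | exact: open_gt].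
Qed.

Lemma continuous_within_hplaneP (T : topologicalType) (F : R * R -> T) :
  {within @hplane R, continuous F} <-> forall z, hplane z -> {for z, continuous F}.
Proof.
rewrite continuous_open_subspace; last exact: open_hplane.
by split => Fc z zP; apply: Fc; rewrite ?inE // -inE.
Qed.

Lemma identity_lift_id : identity_lift Gam pi id id.
Proof. by split => //; apply/continuous_within_hplaneP => z _; exact: cvg_id. Qed.

Lemma identity_lift_comp f1 f2 F1 F2 :
  identity_lift Gam pi f1 F1 -> identity_lift Gam pi f2 F2 ->
  identity_lift Gam pi (f2 \o f1) (F2 \o F1).
Proof.
move=> [F1c F1P F1pi F1mob] [F2c F2P F2pi F2mob]; split.
- apply/continuous_within_hplaneP => z zP; apply: continuous_comp.
    exact: (continuous_within_hplaneP F1).1 F1c z zP.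
  exact: (continuous_within_hplaneP F2).1 F2c _ (F1P z zP).
- by move=> z zP; apply/F2P/F1P.
- by move=> z zP /=; rewrite F2pi ?F1pi //; apply: F1P.
- by move=> g z Gg zP /=; rewrite F1mob // F2mob //; apply: F1P.
Qed.

Lemma identity_lift_fix_fibre f F z z' : quotient_by Gam pi ->
  identity_lift Gam pi f F -> hplane z -> hplane z' ->
  F z = z -> pi z = pi z' -> F z' = z'.
Proof.
move=> [_ _ _ pi_fibre] [_ _ _ Fmob] zP z'P Fz pizz'.
by have [g Gg ->] := (pi_fibre z z' zP z'P).1 pizz'; rewrite Fmob // Fz.
Qed.

Hypotheses (GamF : fuchsian_free Gam) (piQ : quotient_by Gam pi).

Lemma identity_lift_inj f F : injective f -> identity_lift Gam pi f F ->
  forall z z', hplane z -> hplane z' -> F z = F z' -> z = z'.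
Proof.
move=> f_inj [_ FP Fpi Fmob] z z' zP z'P Fzz'.
have [_ _ _ pi_fibre] := piQ; have [_ _ _ _ Gam_free] := GamF.
have /f_inj : f (pi z) = f (pi z') by rewrite -!Fpi // Fzz'.
case/(pi_fibre z z' zP z'P) => g Gg z'E.
have : mob g (F z') = F z' by rewrite -Fzz' -Fmob // -z'E.
by case/(Gam_free _ _ Gg (FP z' z'P)) => gE; rewrite z'E gE ?mob1 ?mobN1.
Qed.

Lemma identity_lift_surj f h F : cancel h f -> identity_lift Gam pi f F ->
  forall w, hplane w -> exists2 z, hplane z & F z = w.
Proof.
move=> hK [_ FP Fpi Fmob] w wP; have [_ _ pi_surj pi_fibre] := piQ.
have [z zP pizE] := pi_surj (h (pi w)).
have : pi (F z) = pi w by rewrite Fpi // pizE hK.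
case/(pi_fibre _ _ (FP z zP) wP) => g Gg ->.
by exists (mob g z); rewrite ?Fmob //; apply: hplane_mob (fuchsian_det GamF Gg) zP.
Qed.

(* For [w1] near [w], [h (pi w1)] is [pi p] for some [p] in a small neighbourhood [O]
   of [H w]; then [F p] and [w1] are close points of the same fibre, so [H w1 = p]. *)
Lemma identity_lift_inverse_continuous f h F H :
  continuous h -> cancel f h -> cancel h f ->
  identity_lift Gam pi f F ->
  (forall w, hplane w -> hplane (H w) /\ F (H w) = w) ->
  (forall z, hplane z -> H (F z) = z) ->
  {within @hplane R, continuous H}.
Proof.
move=> hc fh hf [Fc FP Fpi _] HP HF; have [pic pi_open _ _] := piQ.
apply/continuous_within_hplaneP => w wP V /= HwV.
have [r r0 pi_inj] := quotient_locally_injective GamF piQ wP.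
have [HwP FHw] := HP w wP.
pose O := interior (V `&` (@hplane R `&` F @^-1` ball w r)).
have OHw : O (H w).
  apply: filterI HwV (filterI _ _); first exact: open_nbhs_nbhs (conj open_hplane HwP).
  have FHwc := (continuous_within_hplaneP F).1 Fc _ HwP.
  by apply: FHwc; rewrite FHw; exact: nbhsx_ballx.
have OP : O `<=` V `&` (@hplane R `&` F @^-1` ball w r) by exact: interior_subset.
have pi_cont : {in @hplane R, continuous pi}.
  by move=> z; rewrite inE; exact: (continuous_within_hplaneP pi).1 pic z.
have W_open : open (@hplane R `&` pi @^-1` (h @^-1` (pi @` O))).
  apply: ((continuous_inP pi open_hplane).1 pi_cont).
  apply: (continuousP _).1 hc _ (pi_open _ (@open_interior _ _) _).
  by move=> o /OP[_ []].
have W_nbhs : nbhs w (@hplane R `&` pi @^-1` (h @^-1` (pi @` O))).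
  apply: open_nbhs_nbhs; split => //; split => //=.
  by exists (H w) => //; rewrite -{2}FHw Fpi // fh.
apply: filterS (filterI W_nbhs (nbhsx_ballx w r r0)) => w1 [[w1P [p Op pipE]] ww1].
have [pV [pP Fpw]] := OP p Op.
suff <- : F p = w1 by rewrite /= HF.
apply: pi_inj => //; first exact: FP.
by rewrite Fpi // pipE hf.
Qed.

Lemma identity_lift_inv f h F : homeo f -> cancel f h -> cancel h f ->
  identity_lift Gam pi f F ->
  exists H, identity_lift Gam pi h H /\ forall z, hplane z -> H (F z) = z.
Proof.
move=> [_ [g gc [_ gK]]] fh hf Flift.
have Finj := identity_lift_inj (can_inj fh) Flift.
have [_ FP Fpi Fmob] := Flift.
have preimage w : exists z, hplane w -> hplane z /\ F z = w.
  case: (pselect (hplane w)) => [wP | ?]; last by exists w.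
  by have [z zP Fz] := identity_lift_surj hf Flift wP; exists z.
have [H HP] := choice preimage.
have HF z : hplane z -> H (F z) = z.
  by move=> zP; have [? ?] := HP (F z) (FP z zP); apply: Finj.
have hc : continuous h by rewrite (_ : h = g) // funeqE => y; rewrite -{1}(gK y) fh.
exists H; split => //; split.
- exact: identity_lift_inverse_continuous hc fh hf Flift HP HF.
- by move=> w /HP[].
- by move=> w /HP[? FHw]; rewrite -{2}FHw Fpi // fh.
- move=> k z Gk zP; have [HzP FHz] := HP z zP.
  have k1 := fuchsian_det GamF Gk.
  have [HkzP FHkz] := HP _ (hplane_mob k1 zP).
  by apply: Finj; rewrite ?Fmob ?FHkz ?FHz //; apply: hplane_mob.
Qed.

Lemma Fix_c_lift_fixing f z : hplane z -> Fix_c Gam pi f (pi z) ->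
  exists2 F, identity_lift Gam pi f F & F z = z.
Proof.
move=> zP [F [Flift [z' z'P [Fz' piz']]]]; exists F => //.
exact: identity_lift_fix_fibre piQ Flift z'P zP Fz' piz'.
Qed.

Lemma gen_group_lift_fixing m (fs : 'I_m -> S -> S) z : hplane z ->
  (forall i, homeo (fs i)) ->
  (forall i, exists2 F, identity_lift Gam pi (fs i) F & F z = z) ->
  forall g, gen_group fs g -> exists2 G, identity_lift Gam pi g G & G z = z.
Proof.
move=> zP fs_homeo fs_fix g.
elim=> [|g' i _ [G Glift Gz] | g' i h _ [G Glift Gz] fh hf].
- by exists id => //; exact: identity_lift_id.
- have [F Flift Fz] := fs_fix i.
  by exists (G \o F); [exact: identity_lift_comp | rewrite /= Fz].
- have [F Flift Fz] := fs_fix i.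
  have [H [Hlift HF]] := identity_lift_inv (fs_homeo i) fh hf Flift.
  by exists (G \o H); [exact: identity_lift_comp | rewrite /= -{1}Fz HF].
Qed.

End IdentityLifts.

Theorem lemma2p1 (R : realType) (S : topologicalType)
    (Gam : set 'M[R]_2) (pi : R * R -> S)
    (m : nat) (fs : 'I_m -> S -> S) :
  hyperbolic_surface Gam pi ->
  (forall i, Homeo0 R (fs i)) ->
  (forall g h, gen_group fs g -> gen_group fs h -> g \o h = h \o g) ->
  \bigcap_(i in [set: 'I_m]) Fix_c Gam pi (fs i)
    `<=` Fix_c_group Gam pi (gen_group fs).
Proof.
move=> [GamF piQ _] fs_homeo0 _ x; have [_ _ pi_surj _] := piQ.
have [z zP <-] := pi_surj x => x_fix f Gf.
have fs_fix i : exists2 F, identity_lift Gam pi (fs i) F & F z = z.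
  exact: (Fix_c_lift_fixing piQ zP (x_fix i I)).
have [F Flift Fz] :=
  gen_group_lift_fixing GamF piQ zP (fun i => (fs_homeo0 i).1) fs_fix Gf.
by exists F; split => //; exists z.
Qed.
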